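(* Let $\mathcal{H}$ be an $n$-dimensional (real or complex) Hilbert space, let $F=\{f_i\}_{i=1}^N$ be a tight frame for $\mathcal{H}$, and let $\{q_i\}_{i=1}^N$ be the weight number sequence associated with a probability sequence $\{p_i\}_{i=1}^N$. Then the canonical dual $S_F^{-1}F$ is a 1-erasure probabilistic spectrally optimal dual (PSOD) of $F$ if and only if $S_F^{-1}F\in\Delta_F^{(1)}$.
   Context: A finite sequence $F=\{f_i\}_{i=1}^N$ in $\mathcal{H}$ is a frame if there are $A,B>0$ with $A\|f\|^2\le\sum_{i=1}^N|\langle f,f_i\rangle|^2\le B\|f\|^2$ for all $f$; it is tight if one can take $A=B$. The frame operator is $S_Ff=\sum_{i=1}^N\langle f,f_i\rangle f_i$ and the canonical dual is $S_F^{-1}F=\{S_F^{-1}f_i\}_{i=1}^N$. A frame $G=\{g_i\}_{i=1}^N$ is a dual of $F$ if $f=\sum_i\langle f,f_i\rangle g_i=\sum_i\langle f,g_i\rangle f_i$ for all $f$. A probability sequence is $\{p_i\}_{i=1}^N$ with $0\le p_i\le1$, $\sum p_i=1$; weight numbers $q_i=\frac{\sum_{j} p_j}{\sum_{j} p_j-p_i}\cdot\frac{N-1}{n}$. For $\Lambda\subseteq\{1,\dots,N\}$ the error operator is $E_{\Lambda,(F,G)}f=\sum_{i\in\Lambda}q_i\langle f,f_i\rangle g_i$. Set $r_P^{(1)}(F,G)=\max_{|\Lambda|=1}\rho(E_{\Lambda,(F,G)})$ ($\rho$ = spectral radius) and $\mathcal{A}_P^{(1)}(F,G)=\max_{|\Lambda|=1}\frac{\|E_{\Lambda,(F,G)}\|+\rho(E_{\Lambda,(F,G)})}{2}$.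 A dual $G$ of $F$ is a 1-erasure PSOD of $F$ if $r_P^{(1)}(F,G)=\min\{r_P^{(1)}(F,G'):G'\text{ a dual of }F\}$. $\Delta_F^{(1)}$ is the set of duals $G$ of $F$ minimizing $\mathcal{A}_P^{(1)}(F,G)$ over all duals of $F$ (1-erasure PASOD-frames). *)

From HB Require Import structures.
From mathcomp Require Import all_boot all_order all_algebra.
From mathcomp Require Import classical_sets reals.
From mathcomp Require Import complex.
Set Implicit Arguments. Unset Strict Implicit. Unset Printing Implicit Defensive.
Import Order.TTheory GRing.Theory Num.Theory.
Local Open Scope ring_scope.
Local Open Scope classical_set_scope.

Section Frames.
Variables (R : realType) (n N : nat).
Local Notation C := R[i].
Local Notation vec := 'cV[C]_n.
Local Notation mat := 'M[C]_n.

(* The Hilbert space H: C^n if [isreal = false], and R^n (viewed inside C^n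
   as the vectors with real coordinates) if [isreal = true]. *)
Definition inH (isreal : bool) (f : vec) : bool :=
  isreal ==> [forall k, Im (f k 0) == 0].

Definition inner (f g : vec) : C := \sum_(k < n) f k 0 * conjc (g k 0).

Definition vnorm (f : vec) : R := Num.sqrt (\sum_(k < n) Normc.normc (f k 0) ^+ 2).

(* conjugate transpose of a column vector: f^* , so that f^* *m g = <g,f> *)
Definition adjv (f : vec) : 'rV[C]_n := (map_mx conjc f)^T.

Definition is_frame (isreal : bool) (F : 'I_N -> vec) : Prop :=
  exists A B : R, 0 < A /\ 0 < B /\
    forall f, inH isreal f ->
      A * vnorm f ^+ 2 <= \sum_i Normc.normc (inner f (F i)) ^+ 2 /\
      \sum_i Normc.normc (inner f (F i)) ^+ 2 <= B * vnorm f ^+ 2.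

Definition is_tight_frame (isreal : bool) (F : 'I_N -> vec) : Prop :=
  exists A : R, 0 < A /\
    forall f, inH isreal f -> \sum_i Normc.normc (inner f (F i)) ^+ 2 = A * vnorm f ^+ 2.

Definition frame_op (F : 'I_N -> vec) : mat := \sum_i (F i *m adjv (F i)).

Definition canonical_dual (F : 'I_N -> vec) : 'I_N -> vec :=
  fun i => invmx (frame_op F) *m F i.

Definition is_dual (isreal : bool) (F G : 'I_N -> vec) : Prop :=
  (forall i, inH isreal (G i)) /\ is_frame isreal G /\
  forall f, inH isreal f ->
    f = \sum_i inner f (F i) *: G i /\ f = \sum_i inner f (G i) *: F i.

Definition prob_seq (p : 'I_N -> R) : Prop :=
  (forall i, 0 <= p i <= 1) /\ \sum_i p i = 1.

Definition weight (p : 'I_N -> R) (i : 'I_N) : R :=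
  (\sum_j p j) / (\sum_j p j - p i) * ((N.-1)%:R / n%:R).

Definition err_op (p : 'I_N -> R) (F G : 'I_N -> vec) (L : {set 'I_N}) : mat :=
  \sum_(i in L) ((weight p i)%:C%C *: (G i *m adjv (F i))).

Definition eigenvalue_of (A : mat) (l : C) : Prop :=
  exists2 v : vec, v != 0 & A *m v = l *: v.

Definition spec_rad (A : mat) : R :=
  sup [set Normc.normc l | l in eigenvalue_of A].

Definition op_norm (isreal : bool) (A : mat) : R :=
  sup [set vnorm (A *m f) | f in [set f : vec | inH isreal f /\ vnorm f <= 1]].

Definition rP1 (p : 'I_N -> R) (F G : 'I_N -> vec) : R :=
  \big[Num.max/0]_(L : {set 'I_N} | #|L| == 1%N) spec_rad (err_op p F G L).

Definition AP1 (isreal : bool) (p : 'I_N -> R) (F G : 'I_N -> vec) : R :=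
  \big[Num.max/0]_(L : {set 'I_N} | #|L| == 1%N)
     ((op_norm isreal (err_op p F G L) + spec_rad (err_op p F G L)) / 2).

Definition is_PSOD1 (isreal : bool) (p : 'I_N -> R) (F G : 'I_N -> vec) : Prop :=
  is_dual isreal F G /\
  forall G', is_dual isreal F G' -> rP1 p F G <= rP1 p F G'.

Definition in_Delta1 (isreal : bool) (p : 'I_N -> R) (F G : 'I_N -> vec) : Prop :=
  is_dual isreal F G /\
  forall G', is_dual isreal F G' -> AP1 isreal p F G <= AP1 isreal p F G'.

End Frames.

From HB Require Import structures.
From mathcomp Require Import all_boot all_order all_algebra.
From mathcomp Require Import classical_sets reals.
From mathcomp Require Import complex.
From mathcomp Require Import ring lra.
Set Implicit Arguments. Unset Strict Implicit. Unset Printing Implicit Defensive.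
Import Order.TTheory GRing.Theory Num.Theory.
Local Open Scope ring_scope.
Local Open Scope complex_scope.
Local Notation Re := complex.Re.
Local Notation Im := complex.Im.

(* A tight frame with bound A has frame operator A I, so its canonical dual is
   U = A^-1 F.  Each one-point error operator E_i = q_i g_i f_i^* has rank one:
   its spectral radius is q_i |<g_i, f_i>| and its norm at most q_i |g_i| |f_i|,
   with equality of the two for U, while for any dual with g_i in H the norm
   dominates the radius.  Hence A_P(U) = r_P(U) <= r_P(G) <= A_P(G) whenever U
   minimises r_P.  Conversely, if a dual G had r_P(G) < r_P(U), the dual
   (1 - t) U + t G would, for small t > 0, have every (norm + radius) / 2 below
   r_P(U) = A_P(U), so U would not minimise A_P. *)

Section ComplexNorm.
Variable R : realType.
Local Notation C := R[i].
Import Normc.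
Implicit Types z : C.

Lemma normc_ge0 z : 0 <= normc z.
Proof. by case: z => a b; rewrite sqrtr_ge0. Qed.

Lemma normc_sqr z : normc z ^+ 2 = Re z ^+ 2 + Im z ^+ 2.
Proof. by case: z => a b /=; rewrite sqr_sqrtr // addr_ge0 // sqr_ge0. Qed.

Lemma mulJc z : conjc z * z = (normc z ^+ 2)%:C.
Proof.
rewrite normc_sqr; case: z => a b /=.
by apply/eqP; rewrite eq_complex /=; apply/andP; split; apply/eqP; ring.
Qed.

Lemma normc_real (r : R) : normc r%:C = `|r|.
Proof. by rewrite /= expr0n addr0 sqrtr_sqr. Qed.

Lemma conjcR (r : R) : conjc r%:C = r%:C :> C.
Proof. by apply/eqP; rewrite eq_complex /= oppr0 !eqxx. Qed.

Lemma normcJ z : normc (conjc z) = normc z.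
Proof. by case: z => a b /=; rewrite sqrrN. Qed.

Lemma Re_le_normc z : Re z <= normc z.
Proof.
apply: ler_normlW; rewrite -ler_sqr ?nnegrE ?normc_ge0 //.
by rewrite real_normK ?num_real // normc_sqr lerDl sqr_ge0.
Qed.

End ComplexNorm.

Section InnerProduct.
Variables (R : realType) (n : nat).
Local Notation C := R[i].
Local Notation vec := 'cV[C]_n.
Import Normc.
Implicit Types (x y z : vec) (c : C).

Lemma innerDl x y z : inner (x + y) z = inner x z + inner y z.
Proof. by rewrite /inner -big_split; apply: eq_bigr => k _; rewrite mxE mulrDl. Qed.

Lemma innerDr x y z : inner x (y + z) = inner x y + inner x z.
Proof. by rewrite /inner -big_split; apply: eq_bigr => k _; rewrite mxE rmorphD mulrDr. Qed.

Lemma innerZl c x y : inner (c *: x) y = c * inner x y.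
Proof. by rewrite /inner mulr_sumr; apply: eq_bigr => k _; rewrite mxE mulrA. Qed.

Lemma innerZr c x y : inner x (c *: y) = conjc c * inner x y.
Proof. by rewrite /inner mulr_sumr; apply: eq_bigr => k _; rewrite mxE rmorphM mulrCA. Qed.

Lemma innerC x y : inner y x = conjc (inner x y).
Proof.
rewrite /inner rmorph_sum; apply: eq_bigr => k _.
by rewrite rmorphM /= conjcK mulrC.
Qed.

Lemma inner0l y : inner 0 y = 0.
Proof. by rewrite /inner big1 // => k _; rewrite mxE mul0r. Qed.

Lemma inner0r y : inner y 0 = 0.
Proof. by rewrite innerC inner0l conjc0. Qed.

Lemma inner_sumr I (r : seq I) (P : pred I) x (v : I -> vec) :
  inner x (\sum_(i <- r | P i) v i) = \sum_(i <- r | P i) inner x (v i).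
Proof.
rewrite /inner exchange_big /=; apply: eq_bigr => k _.
by rewrite summxE rmorph_sum mulr_sumr.
Qed.

Lemma vnorm_ge0 x : 0 <= vnorm x.
Proof. exact: sqrtr_ge0. Qed.

Lemma vnorm_sqr x : vnorm x ^+ 2 = \sum_(k < n) normc (x k 0) ^+ 2.
Proof. by rewrite sqr_sqrtr // sumr_ge0 // => k _; rewrite sqr_ge0. Qed.

Lemma inner_self x : inner x x = (vnorm x ^+ 2)%:C.
Proof.
rewrite vnorm_sqr rmorph_sum; apply: eq_bigr => k _.
by rewrite mulrC mulJc.
Qed.

Lemma vnorm_eq0 x : vnorm x = 0 -> x = 0.
Proof.
move=> x0; have : \sum_(k < n) normc (x k 0) ^+ 2 = 0 by rewrite -vnorm_sqr x0 expr0n.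
move/psumr_eq0P => xk0; apply/matrixP => k j; rewrite (ord1 j) mxE.
apply: eq0_normc; apply/eqP; rewrite -sqrf_eq0; apply/eqP.
by apply: xk0 => // l _; rewrite sqr_ge0.
Qed.

Lemma vnormZ c x : vnorm (c *: x) = normc c * vnorm x.
Proof.
rewrite /vnorm -[normc c](ger0_norm (normc_ge0 c)) -sqrtr_sqr.
rewrite -sqrtrM ?sqr_ge0 // mulr_sumr.
by congr Num.sqrt; apply: eq_bigr => k _; rewrite mxE normcM exprMn.
Qed.

Lemma vnorm0 : vnorm (0 : vec) = 0.
Proof. by rewrite -(scale0r 0) vnormZ normc0 mul0r. Qed.

Lemma vnormD_sqr x y :
  vnorm (x + y) ^+ 2 = vnorm x ^+ 2 + 2 * Re (inner x y) + vnorm y ^+ 2.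
Proof.
apply: complexI; rewrite -inner_self !rmorphD /= -!inner_self innerDl !innerDr.
rewrite [inner y x]innerC rmorphM /=.
have -> : (2 : R)%:C = 2%:R by rewrite rmorphMn rmorph1.
rewrite -addcJ; ring.
Qed.

Lemma vnormD_sqr_le x y :
  vnorm (x + y) ^+ 2 <= vnorm x ^+ 2 + 2 * normc (inner x y) + vnorm y ^+ 2.
Proof. by rewrite vnormD_sqr lerD2r lerD2l ler_pM2l ?Re_le_normc. Qed.

Lemma CauchySchwarz x y : normc (inner x y) <= vnorm x * vnorm y.
Proof.
have [y0|yn0] := eqVneq (vnorm y) 0.
  by rewrite (vnorm_eq0 y0) inner0r normc0 vnorm0 mulr0.
set c := inner x y; set m := vnorm y ^+ 2.
have m0 : 0 < m by rewrite exprn_gt0 // lt_def yn0 vnorm_ge0.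
have e : Re (conjc (- ((m^-1)%:C * c)) * c) = - (normc c ^+ 2 / m).
  by rewrite normc_sqr; case: c => a b /=; ring.
have := sqr_ge0 (vnorm (x - ((m^-1)%:C * c) *: y)).
rewrite -scaleNr vnormD_sqr innerZr e vnormZ normcN normcM normc_real.
rewrite ger0_norm; last by rewrite invr_ge0 ltW.
have -> : (m^-1 * normc c * vnorm y) ^+ 2 = normc c ^+ 2 / m.
  by rewrite !exprMn -/m; field; rewrite gt_eqF.
move=> h; rewrite -ler_sqr ?nnegrE ?normc_ge0 ?mulr_ge0 ?vnorm_ge0 // exprMn -/m.
by rewrite -ler_pdivrMr //; lra.
Qed.

End InnerProduct.

Section Subspace.
Variables (R : realType) (n : nat) (b : bool).
Local Notation C := R[i].
Local Notation vec := 'cV[C]_n.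
Implicit Types f g : vec.

Lemma inHE f : inH b f = (b ==> [forall k, Im (f k 0) == 0]).
Proof.
congr (_ ==> _); apply: eq_forallb => k.
by rewrite (sameP eqP (Creal_ImP _)); case: (f k 0) => ? ?; rewrite complex_real.
Qed.

Lemma inH0 : inH b (0 : vec).
Proof. by rewrite inHE; apply/implyP => _; apply/forallP => k; rewrite mxE. Qed.

Lemma inHD f g : inH b f -> inH b g -> inH b (f + g).
Proof.
rewrite !inHE => /implyP f_real /implyP g_real.
apply/implyP => /[dup] /f_real/forallP Hf /g_real/forallP Hg.
by apply/forallP => k; rewrite mxE raddfD /= (eqP (Hf k)) (eqP (Hg k)) addr0.
Qed.

Lemma inHZ (r : R) f : inH b f -> inH b (r%:C *: f).
Proof.
rewrite !inHE => /implyP f_real; apply/implyP => /f_real/forallP Hf.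
apply/forallP => k; rewrite mxE.
by case: (f k 0) (Hf k) => ? ? /= /eqP ->; rewrite mulr0 mul0r addr0.
Qed.

Lemma inH_delta k : inH b (delta_mx k 0 : vec).
Proof.
by rewrite inHE; apply/implyP => _; apply/forallP => j; rewrite mxE; case: (_ && _).
Qed.

End Subspace.

Section RankOne.
Variables (R : realType) (n : nat).
Local Notation C := R[i].
Local Notation vec := 'cV[C]_n.
Import Normc.
Implicit Types u v w f : vec.
Local Open Scope classical_set_scope.

Lemma adjv_mulmx v w : adjv v *m w = (inner w v)%:M.
Proof.
apply/matrixP => i j; rewrite (ord1 i) (ord1 j) !mxE.
by apply: eq_bigr => k _; rewrite !mxE mulrC.
Qed.

Lemma rank1_mulmx u v w : u *m adjv v *m w = inner w v *: u.
Proof. by rewrite -mulmxA adjv_mulmx mul_mx_scalar. Qed.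

Lemma sup_sub_pair0 (S : set R) (x : R) : 0 <= x ->
  S `<=` [set 0; x] -> (x != 0 -> S x) -> sup S = x.
Proof.
move=> x0 S0x Sx; have ubS : ubound S x by move=> y /S0x [] ->.
have sup_mem z : S z -> ubound S z -> sup S = z.
  move=> Sz ubz; apply/eqP; rewrite eq_le ge_sup //; last by exists z.
  by rewrite ub_le_sup //; exists z.
have [x_eq0|/Sx xS] := eqVneq x 0; last exact: sup_mem.
subst x; have [[y Sy]|nS] := boolp.pselect (exists y, S y).
  by apply: sup_mem => //; have [] := S0x y Sy => <-.
rewrite (_ : S = set0) ?sup0 //.
by apply/seteqP; split => y // Sy; apply: nS; exists y.
Qed.

Lemma eigenvalue_rank1 u v l :
  eigenvalue_of (u *m adjv v) l -> l = 0 \/ l = inner u v.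
Proof.
case=> w wn0; rewrite rank1_mulmx => uvw.
have [->|ln0] := eqVneq l 0; [by left | right].
have vwn0 : inner w v != 0.
  apply: contraNneq ln0 => vw0; move: uvw; rewrite vw0 scale0r => /esym/eqP.
  by rewrite scaler_eq0 (negPf wn0) orbF.
by apply: (mulfI vwn0); rewrite -innerZl uvw innerZl mulrC.
Qed.

Lemma spec_rad_rank1 u v : spec_rad (u *m adjv v) = normc (inner u v).
Proof.
apply: sup_sub_pair0; first exact: normc_ge0.
  by move=> _ [l /eigenvalue_rank1 [] -> <-]; [left; rewrite normc0 | right].
move=> uv_n0; exists (inner u v) => //; exists u; last by rewrite rank1_mulmx.
by apply: contraNneq uv_n0 => ->; rewrite inner0l normc0.
Qed.

Lemma vnorm_rank1_le u v f :
  vnorm f <= 1 -> vnorm (u *m adjv v *m f) <= vnorm u * vnorm v.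
Proof.
move=> f1; rewrite rank1_mulmx vnormZ mulrC ler_wpM2l ?vnorm_ge0 //.
apply: le_trans (CauchySchwarz f v) _.
by rewrite ler_piMl ?vnorm_ge0.
Qed.

Lemma op_norm_rank1_le b u v : op_norm b (u *m adjv v) <= vnorm u * vnorm v.
Proof.
apply: ge_sup; last by move=> _ [f [_ f1] <-]; apply: vnorm_rank1_le.
by exists 0, 0; [split; [exact: inH0 | rewrite vnorm0] | rewrite mulmx0 vnorm0].
Qed.

Lemma op_norm_rank1_ge b u v :
  inH b u -> normc (inner u v) <= op_norm b (u *m adjv v).
Proof.
move=> Hu; pose f := (vnorm u)^-1%:C *: u.
have vnorm_f : vnorm f = (vnorm u)^-1 * vnorm u.
  by rewrite vnormZ normc_real ger0_norm // invr_ge0 vnorm_ge0.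
have -> : normc (inner u v) = vnorm (u *m adjv v *m f).
  rewrite rank1_mulmx vnormZ innerZl normcM mulrAC normc_real.
  rewrite ger0_norm ?invr_ge0 ?vnorm_ge0 //.
  have [u0|un0] := eqVneq (vnorm u) 0; last by rewrite mulVf ?mul1r.
  by rewrite (vnorm_eq0 u0) inner0l normc0 mulr0.
apply: ub_le_sup.
  by exists (vnorm u * vnorm v) => _ [g [_ g1] <-]; apply: vnorm_rank1_le.
exists f => //; split; first exact: inHZ.
by rewrite vnorm_f; have [->|un0] := eqVneq (vnorm u) 0; rewrite ?invr0 ?mul0r ?mulVf.
Qed.

End RankOne.

Section FrameOperator.
Variables (R : realType) (n N : nat).
Local Notation C := R[i].
Local Notation vec := 'cV[C]_n.
Local Notation mat := 'M[C]_n.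
Import Normc.
Implicit Types (D : mat) (x y f : vec).

Definition sform D x y : C := (adjv x *m D *m y) 0 0.

Lemma sform_delta D j k : sform D (delta_mx j 0) (delta_mx k 0) = D j k.
Proof. by rewrite /sform /adjv map_delta_mx trmx_delta -rowE -colE !mxE. Qed.

Lemma sformDZ D x y (c : C) :
  sform D (x + c *: y) (x + c *: y) =
  sform D x x + conjc c * c * sform D y y + c * sform D x y + conjc c * sform D y x.
Proof.
have adjvDZ : adjv (x + c *: y) = adjv x + conjc c *: adjv y.
  by apply/matrixP => i j; rewrite !mxE rmorphD rmorphM.
rewrite /sform adjvDZ mulmxDl !mulmxDr -!scalemxAl !mulmxDl -!scalemxAl -?scalemxAr.
rewrite !mxE; ring.
Qed.

Lemma sformB D1 D2 x : sform (D1 - D2) x x = sform D1 x x - sform D2 x x.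
Proof.
rewrite /sform mulmxBr mulmxBl.
by move: (adjv x *m D1 *m x) (adjv x *m D2 *m x) => M1 M2; rewrite !mxE.
Qed.

Lemma sform_scalar (a : C) x : sform a%:M x x = a * (vnorm x ^+ 2)%:C.
Proof. by rewrite /sform mul_mx_scalar -scalemxAl adjv_mulmx inner_self !mxE mulr1n. Qed.

Lemma sform_frame_op (F : 'I_N -> vec) f :
  sform (frame_op F) f f = (\sum_i normc (inner f (F i)) ^+ 2)%:C.
Proof.
rewrite /sform /frame_op mulmx_sumr mulmx_suml summxE rmorph_sum; apply: eq_bigr => i _.
rewrite !mulmxA adjv_mulmx -mulmxA adjv_mulmx -scalar_mxM mxE mulr1n.
by rewrite innerC mulJc.
Qed.

Lemma sform_eq0 (b : bool) D : (b -> forall j k, D j k = D k j) ->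
  (forall f, inH b f -> sform D f f = 0) -> D = 0.
Proof.
move=> Dsym D0; apply/matrixP => j k; rewrite mxE.
have Djj l : D l l = 0 by rewrite -sform_delta D0 ?inH_delta.
have DjkC (c : C) : inH b (delta_mx j 0 + c *: delta_mx k 0) ->
    c * D j k + conjc c * D k j = 0.
  by move/D0; rewrite sformDZ !sform_delta !Djj mulr0 !add0r.
have Dadd : D j k + D k j = 0.
  have := DjkC (1 : R)%:C; rewrite conjcR rmorph1 !mul1r; apply.
  by rewrite inHD ?inHZ ?inH_delta.
suff Djk_sym : D j k = D k j by move/eqP: Dadd; rewrite -Djk_sym -mulr2n mulrn_eq0 => /eqP.
case: b Dsym DjkC {D0} => [-> //|_ DjkC].
(* complex case: testing the form on e_j + 'i e_k isolates D j k - D k j *)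
have := DjkC 'i; rewrite inHE => /(_ isT) /eqP.
have -> : conjc 'i = - 'i :> C by apply/eqP; rewrite eq_complex /= oppr0 !eqxx.
rewrite mulNr subr_eq0 => /eqP; apply: mulfI.
by rewrite eq_complex /= oner_eq0 andbF.
Qed.

Lemma frame_op_real_sym (F : 'I_N -> vec) j k :
  (forall i, inH true (F i)) -> frame_op F j k = frame_op F k j.
Proof.
move=> F_real; rewrite /frame_op !summxE; apply: eq_bigr => i _.
have := F_real i; rewrite inHE => /forallP Fi.
have conj_id l : conjc (F i l 0) = F i l 0.
  by case: (F i l 0) (Fi l) => ? ? /= /eqP ->; rewrite oppr0.
by rewrite !mxE !big_ord1 !mxE !conj_id mulrC.
Qed.

Lemma frame_op_tight b (F : 'I_N -> vec) (A : R) :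
  (forall i, inH b (F i)) ->
  (forall f, inH b f -> \sum_i normc (inner f (F i)) ^+ 2 = A * vnorm f ^+ 2) ->
  frame_op F = (A%:C)%:M.
Proof.
move=> HF HT; apply/eqP; rewrite -subr_eq0; apply/eqP; apply: (sform_eq0 (b := b)).
  by case: b HF {HT} => // HF _ j k; rewrite !mxE frame_op_real_sym // eq_sym.
by move=> f Hf; rewrite sformB sform_frame_op sform_scalar HT // rmorphM subrr.
Qed.

Lemma canonical_dual_tight b (F : 'I_N -> vec) (A : R) : 0 < A ->
  (forall i, inH b (F i)) ->
  (forall f, inH b f -> \sum_i normc (inner f (F i)) ^+ 2 = A * vnorm f ^+ 2) ->
  canonical_dual F = fun i => (A^-1)%:C *: F i.
Proof.
move=> A0 HF HT; apply: boolp.funext => i.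
by rewrite /canonical_dual (frame_op_tight HF HT) invmx_scalar mul_scalar_mx fmorphV.
Qed.

End FrameOperator.

Section Duals.
Variables (R : realType) (n N : nat) (b : bool).
Local Notation C := R[i].
Local Notation vec := 'cV[C]_n.
Import Normc.
Implicit Types (F G U : 'I_N -> vec) (f : vec).

Definition is_bessel F (B : R) :=
  forall f, inH b f -> \sum_i normc (inner f (F i)) ^+ 2 <= B * vnorm f ^+ 2.

Definition dual_mix (t : R) U G : 'I_N -> vec := fun i => (1 - t)%:C *: U i + t%:C *: G i.

Lemma is_bessel_sum_vnorm G : is_bessel G (\sum_i vnorm (G i) ^+ 2).
Proof.
move=> f _; rewrite mulr_suml; apply: ler_sum => i _.
rewrite -exprMn mulrC ler_sqr ?nnegrE ?normc_ge0 ?mulr_ge0 ?vnorm_ge0 //.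
exact: CauchySchwarz.
Qed.

Lemma vnorm_col (c : 'I_N -> C) : vnorm (\col_i c i) ^+ 2 = \sum_i normc (c i) ^+ 2.
Proof. by rewrite vnorm_sqr; apply: eq_bigr => i _; rewrite mxE. Qed.

Lemma reconstruction_lower_bound F G (B : R) f : 0 <= B -> is_bessel F B ->
  (forall f, inH b f -> f = \sum_i inner f (G i) *: F i) -> inH b f ->
  vnorm f ^+ 2 <= B * \sum_i normc (inner f (G i)) ^+ 2.
Proof.
move=> B0 F_bessel recon Hf.
pose a := \col_i inner f (G i); pose c := \col_i inner f (F i).
have ff_ca : (vnorm f ^+ 2)%:C = inner c a.
  rewrite -inner_self {2}(recon f Hf) inner_sumr; apply: eq_bigr => i _.
  by rewrite innerZr !mxE mulrC.
have f_ca : vnorm f ^+ 2 <= vnorm c * vnorm a.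
  by have := CauchySchwarz c a; rewrite -ff_ca normc_real ger0_norm ?sqr_ge0.
have c_bound : vnorm c ^+ 2 <= B * vnorm f ^+ 2 by rewrite vnorm_col; apply: F_bessel.
rewrite -vnorm_col -/a.
have [f0|fn0] := eqVneq (vnorm f) 0.
  by rewrite f0 expr0n mulr_ge0 ?sqr_ge0.
have f2_gt0 : 0 < vnorm f ^+ 2 by rewrite exprn_gt0 // lt_def fn0 vnorm_ge0.
rewrite -(ler_pM2l f2_gt0); apply: le_trans (_ : (vnorm c * vnorm a) ^+ 2 <= _).
  by rewrite -expr2 ler_sqr ?nnegrE ?sqr_ge0 ?mulr_ge0 ?vnorm_ge0.
have -> : vnorm f ^+ 2 * (B * vnorm a ^+ 2) = B * vnorm f ^+ 2 * vnorm a ^+ 2 by ring.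
by rewrite exprMn ler_wpM2r ?sqr_ge0.
Qed.

Lemma is_frame_reconstruction F G (B : R) : 0 < B -> is_bessel F B ->
  (forall f, inH b f -> f = \sum_i inner f (G i) *: F i) -> is_frame b G.
Proof.
move=> B0 F_bessel recon.
have G0 : 0 <= \sum_i vnorm (G i) ^+ 2 by apply: sumr_ge0 => i _; rewrite sqr_ge0.
exists B^-1, (\sum_i vnorm (G i) ^+ 2 + 1); do 2?split; rewrite ?invr_gt0 ?ltr_pwDr //.
move=> f Hf; split.
  by rewrite ler_pdivrMl // (reconstruction_lower_bound (ltW B0) F_bessel recon).
apply: le_trans (is_bessel_sum_vnorm G Hf) _.
by rewrite ler_wpM2r ?sqr_ge0 ?lerDl.
Qed.

Lemma is_dual_mix F U G (B : R) (t : R) : 0 < B -> is_bessel F B ->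
  is_dual b F U -> is_dual b F G -> is_dual b F (dual_mix t U G).
Proof.
move=> B0 F_bessel [HU [_ U_recon]] [HG [_ G_recon]].
have mix_recon1 f : inH b f -> f = \sum_i inner f (F i) *: dual_mix t U G i.
  move=> Hf; have -> : \sum_i inner f (F i) *: dual_mix t U G i =
      (1 - t)%:C *: (\sum_i inner f (F i) *: U i) + t%:C *: (\sum_i inner f (F i) *: G i).
    rewrite !scaler_sumr -big_split; apply: eq_bigr => i _.
    by rewrite scalerDr !scalerA mulrC [t%:C * _]mulrC.
  by rewrite -(U_recon f Hf).1 -(G_recon f Hf).1 -scalerDl -rmorphD subrK rmorph1 scale1r.
have mix_recon2 f : inH b f -> f = \sum_i inner f (dual_mix t U G i) *: F i.
  move=> Hf; have -> : \sum_i inner f (dual_mix t U G i) *: F i =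
      (1 - t)%:C *: (\sum_i inner f (U i) *: F i) + t%:C *: (\sum_i inner f (G i) *: F i).
    rewrite !scaler_sumr -big_split; apply: eq_bigr => i _.
    by rewrite innerDr !innerZr !conjcR scalerDl !scalerA.
  by rewrite -(U_recon f Hf).2 -(G_recon f Hf).2 -scalerDl -rmorphD subrK rmorph1 scale1r.
split; first by move=> i; rewrite inHD ?inHZ.
split; first exact: is_frame_reconstruction B0 F_bessel mix_recon2.
by move=> f Hf; split; [exact: mix_recon1 | exact: mix_recon2].
Qed.

End Duals.

Section ErrorOperators.
Variables (R : realType) (n N : nat) (b : bool) (p : 'I_N -> R).
Hypothesis p_prob : prob_seq p.
Local Notation C := R[i].
Local Notation vec := 'cV[C]_n.
Import Normc.
Implicit Types (F G : 'I_N -> vec).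

Local Notation q := (weight n p).

Lemma weight_ge0 i : 0 <= q i.
Proof.
case: p_prob => /(_ i)/andP[_ p1] sum1; rewrite /weight sum1 mul1r.
by rewrite mulr_ge0 ?divr_ge0 ?ler0n ?invr_ge0 ?subr_ge0.
Qed.

Lemma err_op1 F G i : err_op p F G [set i] = ((q i)%:C *: G i) *m adjv (F i).
Proof. by rewrite /err_op big_set1 scalemxAl. Qed.

Lemma spec_rad_err_op1 F G i :
  spec_rad (err_op p F G [set i]) = q i * normc (inner (G i) (F i)).
Proof. by rewrite err_op1 spec_rad_rank1 innerZl normcM normc_real ger0_norm ?weight_ge0. Qed.

Lemma spec_rad_err_op1_le_rP1 F G i : spec_rad (err_op p F G [set i]) <= rP1 p F G.
Proof. by rewrite /rP1; apply: le_bigmax_cond; rewrite cards1. Qed.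

Lemma rP1_le_AP1 F G : (forall i, inH b (G i)) -> rP1 p F G <= AP1 b p F G.
Proof.
move=> HG; apply: bigmax_le => [|_ /cards1P [i ->]]; first exact: bigmax_ge_id.
have AP1_ge : (op_norm b (err_op p F G [set i]) + spec_rad (err_op p F G [set i])) / 2
    <= AP1 b p F G by rewrite /AP1; apply: le_bigmax_cond; rewrite cards1.
apply: le_trans AP1_ge.
have : spec_rad (err_op p F G [set i]) <= op_norm b (err_op p F G [set i]).
  by rewrite err_op1 spec_rad_rank1 op_norm_rank1_ge ?inHZ.
by lra.
Qed.

Lemma AP1_lt F G (c : R) : 0 < c ->
  (forall i, (op_norm b (err_op p F G [set i]) + spec_rad (err_op p F G [set i])) / 2 < c) ->
  AP1 b p F G < c.
Proof. by move=> c0 lt_c; apply: bigmax_lt => // _ /cards1P [i ->]. Qed.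

Lemma AP1_le_rP1_scaled F (a : R) : 0 <= a ->
  AP1 b p F (fun i => a%:C *: F i) <= rP1 p F (fun i => a%:C *: F i).
Proof.
move=> a0; apply: bigmax_le => [|_ /cards1P [i ->]]; first exact: bigmax_ge_id.
apply: le_trans (spec_rad_err_op1_le_rP1 _ _ i).
suff : op_norm b (err_op p F (fun i => a%:C *: F i) [set i]) <=
    spec_rad (err_op p F (fun i => a%:C *: F i) [set i]) by lra.
rewrite spec_rad_err_op1 err_op1 (le_trans (op_norm_rank1_le _ _ _)) //.
rewrite innerZl inner_self -rmorphM !vnormZ !normc_real.
rewrite !ger0_norm ?weight_ge0 ?mulr_ge0 ?sqr_ge0 ?vnorm_ge0 //.
by rewrite -mulrA ler_wpM2l ?weight_ge0 // -mulrA -expr2.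
Qed.

End ErrorOperators.

Section MixingInequalities.
Variable R : realType.

Lemma mix_sqr_le (r s a c t M Mi : R) :
  0 <= a <= r -> 0 <= c <= s -> s < r -> Mi <= M -> 0 < t <= 1 ->
  t * ((r - s) ^+ 2 + M) <= 2 * r * (r - s) ->
  ((1 - t) * a) ^+ 2 + 2 * ((1 - t) * a) * (t * c) + t ^+ 2 * Mi <= r ^+ 2.
Proof.
move=> /andP[a0 ar] /andP[c0 cs] sr MiM /andP[t0 t1] t_small.
set y := (1 - t) * a + t * c.
have y0 : 0 <= y by rewrite addr_ge0 ?mulr_ge0 ?subr_ge0 // ltW.
have yr : y <= r - t * (r - s).
  have : (1 - t) * a <= (1 - t) * r by apply: ler_wpM2l; rewrite ?subr_ge0.
  have : t * c <= t * s by apply: ler_wpM2l => //; exact: ltW.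
  by rewrite /y; lra.
have y2 : y ^+ 2 <= (r - t * (r - s)) ^+ 2 by rewrite ler_sqr ?nnegrE ?(le_trans y0 yr).
have tMi : t ^+ 2 * Mi <= t ^+ 2 * M by apply: ler_wpM2l; rewrite ?sqr_ge0.
have t_small' : t * (t * ((r - s) ^+ 2 + M)) <= t * (2 * r * (r - s)).
  by apply: ler_wpM2l => //; exact: ltW.
have -> : ((1 - t) * a) ^+ 2 + 2 * ((1 - t) * a) * (t * c) = y ^+ 2 - (t * c) ^+ 2.
  by rewrite /y; ring.
have : 0 <= (t * c) ^+ 2 by rewrite sqr_ge0.
have -> : r ^+ 2 = (r - t * (r - s)) ^+ 2 + t ^+ 2 * M
    + t * (2 * r * (r - s)) - t * (t * ((r - s) ^+ 2 + M)) by ring.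
by lra.
Qed.

Lemma exists_mix_weight (r s M : R) : 0 <= s -> s < r -> 0 <= M ->
  exists2 t, 0 < t <= 1 & t * ((r - s) ^+ 2 + M) <= 2 * r * (r - s).
Proof.
move=> s0 sr M0; set K := (r - s) ^+ 2 + M; set e := r * (r - s).
have e0 : 0 < e by rewrite mulr_gt0 ?subr_gt0 // (le_lt_trans s0).
have K0 : 0 <= K by rewrite addr_ge0 ?sqr_ge0.
have Ke0 : 0 < K + e by rewrite ltr_wpDl.
have t0 : 0 < e / (K + e) by rewrite divr_gt0.
exists (e / (K + e)); first by rewrite t0 ler_pdivrMr // mul1r lerDr.
have : e / (K + e) * K <= e / (K + e) * (K + e).
  by apply: ler_wpM2l; rewrite ?lerDl ltW.
have -> : 2 * r * (r - s) = 2 * e by rewrite mulrA.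
by rewrite divfK ?gt_eqF //; lra.
Qed.

End MixingInequalities.

Section MixedDual.
Variables (R : realType) (n : nat).
Local Notation C := R[i].
Local Notation vec := 'cV[C]_n.
Import Normc.

(* The cross term of |(1 - t) a f + t g|^2 is bounded by the radius of the
   error operator of g, which is below r: so the norm of the mixed operator
   exceeds r only at second order in t, while its radius drops at first order. *)
Lemma rank1_mix_lt b {f g : vec} {q a r s t M : R} :
  0 <= q -> 0 <= a -> q * (a * vnorm f ^+ 2) <= r -> q * normc (inner g f) <= s -> s < r ->
  (q * vnorm f * vnorm g) ^+ 2 <= M -> 0 < t <= 1 ->
  t * ((r - s) ^+ 2 + M) <= 2 * r * (r - s) ->
  let E := (q%:C *: ((1 - t)%:C *: (a%:C *: f) + t%:C *: g)) *m adjv f in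
  is_true ((op_norm b E + spec_rad E) / 2 < r).
Proof.
move=> q0 a0 rUr rGs sr M_bound /andP[t0 t1] t_small E.
set rU := q * (a * vnorm f ^+ 2) in rUr *; set rG := q * normc (inner g f) in rGs *.
have rU0 : 0 <= rU by rewrite mulr_ge0 // mulr_ge0 ?sqr_ge0.
have rG0 : 0 <= rG by rewrite mulr_ge0 ?normc_ge0.
have t0' : 0 <= t := ltW t0.
have t1' : 0 <= 1 - t by rewrite subr_ge0.
set h := (1 - t)%:C *: (a%:C *: f) + t%:C *: g.
have rho_le : spec_rad E <= (1 - t) * rU + t * rG.
  rewrite /E spec_rad_rank1 innerZl normcM normc_real ger0_norm //.
  rewrite /h innerDl !innerZl inner_self.
  apply: le_trans (ler_wpM2l q0 (le_normcD _ _)) _.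
  rewrite !normcM !normc_real !ger0_norm ?sqr_ge0 //.
  by rewrite /rU /rG mulrDr mulrCA [q * (t * _)]mulrCA.
have norm_sqr : (q * vnorm h * vnorm f) ^+ 2 <=
    ((1 - t) * rU) ^+ 2 + 2 * ((1 - t) * rU) * (t * rG) + t ^+ 2 * (q * vnorm f * vnorm g) ^+ 2.
  have -> : (q * vnorm h * vnorm f) ^+ 2 = (q * vnorm f) ^+ 2 * vnorm h ^+ 2 by ring.
  apply: le_trans (ler_wpM2l (sqr_ge0 _) (vnormD_sqr_le _ _)) _.
  rewrite !vnormZ !innerZl innerZr !normcM [inner f g]innerC !normcJ !normc_real.
  rewrite !ger0_norm // /rU /rG le_eqVlt; apply/orP; left; apply/eqP; ring.
have norm_le : q * vnorm h * vnorm f <= r.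
  have r0 : 0 <= r := le_trans rU0 rUr.
  rewrite -ler_sqr ?nnegrE ?(mulr_ge0 (mulr_ge0 q0 (vnorm_ge0 _)) (vnorm_ge0 _)) //.
  apply: le_trans norm_sqr _; apply: mix_sqr_le sr M_bound _ t_small.
  - by rewrite rU0 rUr.
  - by rewrite rG0 rGs.
  - by rewrite t0 t1.
have op_le : op_norm b E <= q * vnorm h * vnorm f.
  by rewrite (le_trans (op_norm_rank1_le _ _ _)) // vnormZ normc_real ger0_norm.
have rho_lt : spec_rad E < r.
  have : (1 - t) * rU + t * rG <= (1 - t) * r + t * s.
    by apply: lerD; apply: ler_wpM2l.
  have -> : (1 - t) * r + t * s = r - t * (r - s) by ring.
  have : 0 < t * (r - s) by rewrite mulr_gt0 ?subr_gt0.
  by lra.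
have : op_norm b E <= r by apply: le_trans op_le norm_le.
by lra.
Qed.

End MixedDual.

Section MixedDualFrames.
Variables (R : realType) (n N : nat) (b : bool) (p : 'I_N -> R).
Hypothesis p_prob : prob_seq p.
Local Notation C := R[i].
Local Notation vec := 'cV[C]_n.

Lemma AP1_mix_lt (F G : 'I_N -> vec) (a : R) : 0 <= a ->
  let U := fun i => a%:C *: F i in
  rP1 p F G < rP1 p F U -> exists t, AP1 b p F (dual_mix t U G) < rP1 p F U.
Proof.
move=> a0 U; set r := rP1 p F U; set s := rP1 p F G => sr.
have s0 : 0 <= s by apply: bigmax_ge_id.
pose M := \sum_j (weight n p j * vnorm (F j) * vnorm (G j)) ^+ 2.
have M0 : 0 <= M by apply: sumr_ge0 => j _; apply: sqr_ge0.
have M_bound i : (weight n p i * vnorm (F i) * vnorm (G i)) ^+ 2 <= M.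
  by rewrite /M (bigD1 i) //= lerDl sumr_ge0 // => j _; apply: sqr_ge0.
have [t t01 t_small] := exists_mix_weight s0 sr M0.
exists t; apply: AP1_lt => [|i]; first exact: le_lt_trans sr.
rewrite err_op1; apply: (rank1_mix_lt b (weight_ge0 n p_prob i) a0 _ _ sr (M_bound i) t01 t_small).
  have := spec_rad_err_op1_le_rP1 p F U i.
  rewrite (spec_rad_err_op1 p_prob) innerZl inner_self -rmorphM normc_real ger0_norm.
    exact.
  exact: mulr_ge0 a0 (sqr_ge0 _).
by have := spec_rad_err_op1_le_rP1 p F G i; rewrite (spec_rad_err_op1 p_prob).
Qed.

End MixedDualFrames.

Theorem theorem3p5 (R : realType) (isreal : bool) (n N : nat)
    (F : 'I_N -> 'cV[R[i]]_n) (p : 'I_N -> R) :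
  (forall i, inH isreal (F i)) ->
  is_tight_frame isreal F ->
  prob_seq p ->
  (is_PSOD1 isreal p F (canonical_dual F) <-> in_Delta1 isreal p F (canonical_dual F)).
Proof.
move=> HF [A [A0 F_tight]] p_prob.
have F_bessel : is_bessel isreal F A by move=> f Hf; rewrite F_tight.
have A0' : 0 <= A^-1 by rewrite invr_ge0 ltW.
rewrite (canonical_dual_tight A0 HF F_tight); set U := fun i => _.
have U_AP1 : AP1 isreal p F U = rP1 p F U.
  by apply/eqP; rewrite eq_le AP1_le_rP1_scaled // rP1_le_AP1 // => i; apply: inHZ.
rewrite /is_PSOD1 /in_Delta1 U_AP1.
split=> -[U_dual U_min]; split=> [//|G G_dual].
  by apply: le_trans (U_min G G_dual) (rP1_le_AP1 p F G_dual.1).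
rewrite leNgt; apply/negP => G_lt.
have [t mix_lt] := AP1_mix_lt isreal p_prob A0' G_lt.
by have := U_min _ (is_dual_mix t A0 F_bessel U_dual G_dual); rewrite leNgt mix_lt.
Qed.
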